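(* If $d_{GH}\bigl(\mathcal{H}(X),\mathcal{H}(Y)\bigr) = d_{GH}(X,Y)$ for all finite metric spaces $X,Y$, then $d_{GH}\bigl(\mathcal{H}(X),\mathcal{H}(Y)\bigr) = d_{GH}(X,Y)$ for all compact metric spaces $X,Y$.
   Context: $d_{GH}$ is the Gromov–Hausdorff distance (the infimum of $r$ such that there is a metric space $Z$ containing isometric copies $X',Y'$ of $X,Y$ with Hausdorff distance $|X'Y'|_Z\le r$). For a compact metric space $X$, $\mathcal{H}(X)$ is the set of all nonempty closed subsets of $X$ with the Hausdorff distance $|AB| = \max\{\sup_{a\in A}\inf_{b\in B}|ab|, \sup_{b\in B}\inf_{a\in A}|ab|\}$. *)

From Stdlib Require Import Reals List ClassicalEpsilon.
Open Scope R_scope.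

Record MSpace := { carrier :> Type; dist : carrier -> carrier -> R }.
Arguments dist {m} _ _.

Definition is_metric (X : MSpace) : Prop :=
  (forall x y : X, 0 <= dist x y) /\
  (forall x y : X, dist x y = 0 <-> x = y) /\
  (forall x y : X, dist x y = dist y x) /\
  (forall x y z : X, dist x z <= dist x y + dist y z).

(* supremum / infimum of a set of reals (meaningful when it exists) *)
Definition Rsup (P : R -> Prop) : R := @epsilon R (inhabits 0) (fun m => is_lub P m).
Definition Rinf (P : R -> Prop) : R := - Rsup (fun x => P (- x)).

Definition dist_pt_set {X : MSpace} (a : X) (B : X -> Prop) : R :=
  Rinf (fun r => exists b, B b /\ r = dist a b).

Definition hexcess {X : MSpace} (A B : X -> Prop) : R :=
  Rsup (fun r => exists a, A a /\ r = dist_pt_set a B).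

Definition hausdorff {X : MSpace} (A B : X -> Prop) : R :=
  Rmax (hexcess A B) (hexcess B A).

Definition is_closed {X : MSpace} (A : X -> Prop) : Prop :=
  forall x : X, (forall eps, 0 < eps -> exists a, A a /\ dist x a < eps) -> A x.

Definition nonempty_set {X : MSpace} (A : X -> Prop) : Prop := exists x, A x.

Definition Hcarrier (X : MSpace) : Type :=
  { A : X -> Prop | nonempty_set A /\ is_closed A }.

Definition Hyper (X : MSpace) : MSpace :=
  {| carrier := Hcarrier X;
     dist := fun A B => hausdorff (proj1_sig A) (proj1_sig B) |}.

Definition isometric_embedding {X Z : MSpace} (f : X -> Z) : Prop :=
  forall x x' : X, dist (f x) (f x') = dist x x'.

Definition image {X Z : MSpace} (f : X -> Z) : Z -> Prop :=
  fun z => exists x, f x = z.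

Definition dGH (X Y : MSpace) : R :=
  Rinf (fun r => exists (Z : MSpace) (f : X -> Z) (g : Y -> Z),
          is_metric Z /\ isometric_embedding f /\ isometric_embedding g /\
          hausdorff (image f) (image g) <= r).

Definition finite_space (X : MSpace) : Prop := exists l : list X, forall x, In x l.

Definition compact_space (X : MSpace) : Prop :=
  forall u : nat -> X, exists (phi : nat -> nat) (l : X),
    (forall n, (phi n < phi (S n))%nat) /\
    (forall eps, 0 < eps -> exists N, forall n, (N <= n)%nat -> dist (u (phi n)) l < eps).

(* For compact X and eps > 0, a finite eps-net X' of X is within eps of X in the
   Gromov-Hausdorff sense, and H(X') (closed subsets of X' are subsets of X) is
   within eps of H(X): a closed A of X is eps-close to the set of net points that
   are eps-close to A.  Gluing admissible spaces along a common factor gives the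
   triangle inequality for d_GH, hence |d_GH(H X, H Y) - d_GH(X, Y)| is bounded by
   |d_GH(H X', H Y') - d_GH(X', Y')| + 4 eps = 4 eps. *)
From Pilot Require Import Defs.
From Stdlib Require Import Reals Lra Lia List Classical ClassicalEpsilon.
From Stdlib Require Import FunctionalExtensionality PropExtensionality ProofIrrelevance.
Open Scope R_scope.
Local Notation dist := Defs.dist.

Lemma Rsup_lub (P : R -> Prop) :
  (exists x, P x) -> (exists M, forall x, P x -> x <= M) -> is_lub P (Rsup P).
Proof.
  intros [x Hx] [M HM]. unfold Rsup. apply epsilon_spec.
  destruct (completeness P) as [m Hm].
  - exists M. intros y Hy. now apply HM.
  - now exists x.
  - now exists m.
Qed.

Lemma Rsup_le (P : R -> Prop) r : (exists x, P x) -> (forall x, P x -> x <= r) -> Rsup P <= r.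
Proof.
  intros Hne Hb. destruct (Rsup_lub P Hne (ex_intro _ r Hb)) as [_ H].
  apply H. intros y Hy. now apply Hb.
Qed.

Lemma le_Rsup (P : R -> Prop) M x : (forall y, P y -> y <= M) -> P x -> x <= Rsup P.
Proof.
  intros Hb Hx. destruct (Rsup_lub P (ex_intro _ x Hx) (ex_intro _ M Hb)) as [H _].
  now apply H.
Qed.

Lemma Rinf_le (P : R -> Prop) m x : (forall y, P y -> m <= y) -> P x -> Rinf P <= x.
Proof.
  intros Hb Hx. unfold Rinf.
  enough (-x <= Rsup (fun y => P (-y))) by lra.
  apply le_Rsup with (M := -m).
  - intros y Hy. specialize (Hb _ Hy). lra.
  - now rewrite Ropp_involutive.
Qed.

Lemma Rinf_ge (P : R -> Prop) r : (exists x, P x) -> (forall y, P y -> r <= y) -> r <= Rinf P.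
Proof.
  intros [x Hx] Hb. unfold Rinf.
  enough (Rsup (fun y => P (-y)) <= -r) by lra.
  apply Rsup_le.
  - exists (-x). now rewrite Ropp_involutive.
  - intros y Hy. specialize (Hb _ Hy). lra.
Qed.

Lemma Rinf_approx (P : R -> Prop) m e :
  (exists x, P x) -> (forall y, P y -> m <= y) -> 0 < e -> exists x, P x /\ x < Rinf P + e.
Proof.
  intros Hne Hb He. apply NNPP. intro Hn.
  assert (Rinf P + e <= Rinf P); [|lra].
  apply Rinf_ge; auto. intros y Hy. apply Rnot_lt_le. intro Hlt. apply Hn. now exists y.
Qed.

(** * Hausdorff distance *)

(* Unlike [hausdorff A B <= r], this is meaningful for unbounded sets too. *)
Definition hclose {Z : MSpace} (A B : Z -> Prop) (r : R) : Prop :=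
  (forall a, A a -> forall e, 0 < e -> exists b, B b /\ dist a b < r + e) /\
  (forall b, B b -> forall e, 0 < e -> exists a, A a /\ dist b a < r + e).

Definition dist_bounded {Z : MSpace} (A B : Z -> Prop) (M : R) : Prop :=
  forall a b, A a -> B b -> dist a b <= M.

Lemma hclose_sym {Z : MSpace} (A B : Z -> Prop) r : hclose A B r -> hclose B A r.
Proof. now intros [H1 H2]. Qed.

Lemma hclose_weaken {Z : MSpace} (A B : Z -> Prop) r s : hclose A B r -> r <= s -> hclose A B s.
Proof.
  intros [H1 H2] Hrs; split.
  - intros a Ha e He. destruct (H1 a Ha e He) as [b [Hb Hd]]. exists b; split; auto; lra.
  - intros b Hb e He. destruct (H2 b Hb e He) as [a [Ha Hd]]. exists a; split; auto; lra.
Qed.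

Section MetricSpace.
Variable Z : MSpace.
Hypothesis HZ : is_metric Z.

Lemma metric_nonneg (x y : Z) : 0 <= dist x y.
Proof. apply (proj1 HZ). Qed.

Lemma metric_refl (x : Z) : dist x x = 0.
Proof. now apply (proj1 (proj2 HZ)). Qed.

Lemma metric_eq0 (x y : Z) : dist x y = 0 -> x = y.
Proof. apply (proj1 (proj2 HZ)). Qed.

Lemma metric_sym (x y : Z) : dist x y = dist y x.
Proof. apply (proj1 (proj2 (proj2 HZ))). Qed.

Lemma metric_triangle (x y z : Z) : dist x z <= dist x y + dist y z.
Proof. apply (proj2 (proj2 (proj2 HZ))). Qed.

Lemma dist_pt_set_le (a : Z) (B : Z -> Prop) b : B b -> dist_pt_set a B <= dist a b.
Proof.
  intros Hb. apply Rinf_le with 0.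
  - intros y [b' [_ ->]]. apply metric_nonneg.
  - now exists b.
Qed.

Lemma dist_pt_set_nonneg (a : Z) (B : Z -> Prop) : nonempty_set B -> 0 <= dist_pt_set a B.
Proof.
  intros [b Hb]. apply Rinf_ge.
  - exists (dist a b), b; auto.
  - intros y [b' [_ ->]]. apply metric_nonneg.
Qed.

Lemma dist_pt_set_approx (a : Z) (B : Z -> Prop) e :
  nonempty_set B -> 0 < e -> exists b, B b /\ dist a b < dist_pt_set a B + e.
Proof.
  intros [b Hb] He.
  destruct (Rinf_approx (fun r => exists b, B b /\ r = dist a b) 0 e)
    as [x [[b' [Hb' ->]] Hx]]; auto.
  - exists (dist a b), b; auto.
  - intros y [b'' [_ ->]]. apply metric_nonneg.
  - now exists b'.
Qed.

Lemma hexcess_le (A B : Z -> Prop) r : nonempty_set A ->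
  (forall a, A a -> forall e, 0 < e -> exists b, B b /\ dist a b < r + e) -> hexcess A B <= r.
Proof.
  intros [a0 Ha0] H. apply Rsup_le.
  - exists (dist_pt_set a0 B), a0; auto.
  - intros y [a [Ha ->]]. apply Rle_plus_epsilon. intros e He.
    destruct (H a Ha e He) as [b [Hb Hd]]. pose proof (dist_pt_set_le a B b Hb). lra.
Qed.

Lemma dist_pt_set_le_hexcess (A B : Z -> Prop) M a :
  dist_bounded A B M -> A a -> nonempty_set B -> dist_pt_set a B <= hexcess A B.
Proof.
  intros Hb Ha [b0 Hb0]. apply le_Rsup with M.
  - intros y [a' [Ha' ->]]. eapply Rle_trans; [apply (dist_pt_set_le a' B b0 Hb0)|]. now apply Hb.
  - now exists a.
Qed.

Lemma hausdorff_le (A B : Z -> Prop) r :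
  nonempty_set A -> nonempty_set B -> hclose A B r -> hausdorff A B <= r.
Proof. intros HA HB [H1 H2]. apply Rmax_lub; now apply hexcess_le. Qed.

Lemma dist_bounded_sym (A B : Z -> Prop) M : dist_bounded A B M -> dist_bounded B A M.
Proof. intros H b a Hb Ha. rewrite metric_sym. auto. Qed.

Lemma hclose_hausdorff (A B : Z -> Prop) M :
  nonempty_set A -> nonempty_set B -> dist_bounded A B M -> hclose A B (hausdorff A B).
Proof.
  intros HA HB Hb. unfold hausdorff. split.
  - intros a Ha e He. destruct (dist_pt_set_approx a B e HB He) as [b [Hb' Hd]].
    exists b; split; auto.
    pose proof (dist_pt_set_le_hexcess A B M a Hb Ha HB).
    pose proof (Rmax_l (hexcess A B) (hexcess B A)). lra.
  - intros b Hb' e He. destruct (dist_pt_set_approx b A e HA He) as [a [Ha Hd]].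
    exists a; split; auto.
    pose proof (dist_pt_set_le_hexcess B A M b (dist_bounded_sym _ _ _ Hb) Hb' HA).
    pose proof (Rmax_r (hexcess A B) (hexcess B A)). lra.
Qed.

Lemma hausdorff_nonneg (A B : Z -> Prop) M :
  nonempty_set A -> nonempty_set B -> dist_bounded A B M -> 0 <= hausdorff A B.
Proof.
  intros [a Ha] HB Hb.
  pose proof (dist_pt_set_le_hexcess A B M a Hb Ha HB). pose proof (dist_pt_set_nonneg a B HB).
  pose proof (Rmax_l (hexcess A B) (hexcess B A)). unfold hausdorff. lra.
Qed.

Lemma hclose_trans (A B C : Z -> Prop) r s : hclose A B r -> hclose B C s -> hclose A C (r + s).
Proof.
  intros [H1 H2] [H3 H4]. split.
  - intros a Ha e He.
    destruct (H1 a Ha (e/2)) as [b [Hb Hab]]; [lra|].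
    destruct (H3 b Hb (e/2)) as [c [Hc Hbc]]; [lra|].
    exists c; split; auto. pose proof (metric_triangle a b c). lra.
  - intros c Hc e He.
    destruct (H4 c Hc (e/2)) as [b [Hb Hcb]]; [lra|].
    destruct (H2 b Hb (e/2)) as [a [Ha Hba]]; [lra|].
    exists a; split; auto. pose proof (metric_triangle c b a). lra.
Qed.

Lemma hclose_refl (A : Z -> Prop) : hclose A A 0.
Proof. split; intros a Ha e He; exists a; split; auto; rewrite metric_refl; lra. Qed.

Lemma list_separated (x : Z) (l : list Z) :
  exists eps, 0 < eps /\ forall a, In a l -> a <> x -> eps <= dist x a.
Proof.
  induction l as [|a l [eps [Heps IH]]].
  - exists 1. split; [lra | intros a []].
  - destruct (classic (a = x)) as [->|Hax].
    + exists eps. split; auto. intros b [<-|Hb] Hbx; [congruence|auto].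
    + assert (Hxa : 0 < dist x a).
      { destruct (metric_nonneg x a) as [|H]; auto.
        exfalso. apply Hax. symmetry. now apply metric_eq0. }
      exists (Rmin eps (dist x a)). split; [now apply Rmin_glb_lt|].
      intros b [<-|Hb] Hbx; [apply Rmin_r|].
      eapply Rle_trans; [apply Rmin_l|auto].
Qed.

Lemma is_closed_finite (A : Z -> Prop) (l : list Z) : (forall z, A z -> In z l) -> is_closed A.
Proof.
  intros Hl x Hx. destruct (list_separated x l) as [eps [He H]].
  destruct (Hx eps He) as [a [Ha Hd]].
  destruct (classic (a = x)) as [<-|Hax]; auto.
  specialize (H a (Hl a Ha) Hax). lra.
Qed.

End MetricSpace.

(** * The hyperspace of a bounded metric space *)

Definition bounded (X : MSpace) : Prop := exists M, forall x y : X, dist x y <= M.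

Definition bounded_metric (X : MSpace) : Prop := is_metric X /\ inhabited X /\ bounded X.

Lemma Hyper_metric (X : MSpace) : is_metric X -> bounded X -> is_metric (Hyper X).
Proof.
  intros HX [M HM].
  assert (Hb : forall A B : X -> Prop, dist_bounded A B M) by (intros A B a b _ _; apply HM).
  split; [|split; [|split]]; simpl.
  - intros [A [HA HcA]] [B [HB HcB]]. eapply hausdorff_nonneg; eauto.
  - intros [A [HA HcA]] [B [HB HcB]]; simpl. split.
    + intro H0. destruct (hclose_hausdorff X HX A B M HA HB (Hb _ _)) as [H1 H2].
      rewrite H0 in H1, H2.
      assert (A = B) as <-.
      { extensionality x. apply propositional_extensionality. split; intro Hx.
        - apply HcB. intros eps He. destruct (H1 x Hx eps He) as [b [Hb' Hd]].
          exists b; split; auto; lra.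
        - apply HcA. intros eps He. destruct (H2 x Hx eps He) as [b [Hb' Hd]].
          exists b; split; auto; lra. }
      f_equal. apply proof_irrelevance.
    + intro H. injection H as <-. apply Rle_antisym.
      * apply hausdorff_le; auto. now apply hclose_refl.
      * eapply hausdorff_nonneg; eauto.
  - intros A B. apply Rmax_comm.
  - intros [A [HA HcA]] [B [HB HcB]] [C [HC HcC]]; simpl.
    apply hausdorff_le; auto.
    apply (hclose_trans X HX A B C); eapply hclose_hausdorff; eauto.
Qed.

Lemma Hyper_bounded (X : MSpace) : is_metric X -> bounded X -> bounded (Hyper X).
Proof.
  intros HX [M HM]. exists M. intros [A [HA HcA]] [B [HB HcB]]; simpl.
  apply hausdorff_le; auto. split.
  - intros a _ e He. destruct HB as [b Hb]. exists b; split; auto. specialize (HM a b); lra.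
  - intros b _ e He. destruct HA as [a Ha]. exists a; split; auto. specialize (HM b a); lra.
Qed.

Lemma Hyper_inhabited (X : MSpace) : is_metric X -> inhabited X -> inhabited (Hyper X).
Proof.
  intros HX [x0]. constructor. exists (fun x => x = x0). split.
  - now exists x0.
  - apply (is_closed_finite X HX _ (x0 :: nil)). intros z ->. now left.
Qed.

Lemma Hyper_bounded_metric (X : MSpace) : bounded_metric X -> bounded_metric (Hyper X).
Proof.
  intros [HX [Hi Hb]].
  split; [|split]; [apply Hyper_metric|apply Hyper_inhabited|apply Hyper_bounded]; auto.
Qed.

(** * Gromov-Hausdorff distance *)

Definition GH_close (A B : MSpace) (r : R) : Prop :=
  exists (Z : MSpace) (f : A -> Z) (g : B -> Z), is_metric Z /\
    isometric_embedding f /\ isometric_embedding g /\ hclose (image f) (image g) r.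

Definition GH_admissible (A B : MSpace) (r : R) : Prop :=
  exists (Z : MSpace) (f : A -> Z) (g : B -> Z), is_metric Z /\
    isometric_embedding f /\ isometric_embedding g /\ hausdorff (image f) (image g) <= r.

Lemma GH_close_sym (A B : MSpace) r : GH_close A B r -> GH_close B A r.
Proof.
  intros [Z [f [g [HZ [Hf [Hg H]]]]]].
  exists Z, g, f. do 3 (split; auto). now apply hclose_sym.
Qed.

Lemma image_nonempty {A Z : MSpace} (f : A -> Z) : inhabited A -> nonempty_set (image f).
Proof. intros [a]. now exists (f a), a. Qed.

Lemma image_dist_bounded (A B Z : MSpace) (f : A -> Z) (g : B -> Z) :
  is_metric Z -> isometric_embedding f -> isometric_embedding g ->
  bounded_metric A -> bounded_metric B -> exists M, dist_bounded (image f) (image g) M.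
Proof.
  intros HZ Hf Hg [_ [[a0] [MA HA]]] [_ [[b0] [MB HB]]].
  exists (MA + dist (f a0) (g b0) + MB). intros z w [a <-] [b <-].
  pose proof (metric_triangle Z HZ (f a) (f a0) (g b)).
  pose proof (metric_triangle Z HZ (f a0) (g b0) (g b)).
  rewrite Hf, Hg in *. pose proof (HA a a0). pose proof (HB b0 b). lra.
Qed.

Lemma GH_admissible_nonneg (A B : MSpace) r :
  bounded_metric A -> bounded_metric B -> GH_admissible A B r -> 0 <= r.
Proof.
  intros GA GB [Z [f [g [HZ [Hf [Hg Hr]]]]]].
  destruct (image_dist_bounded A B Z f g HZ Hf Hg GA GB) as [M HM].
  eapply Rle_trans; [|exact Hr].
  eapply hausdorff_nonneg; eauto; apply image_nonempty; [apply GA|apply GB].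
Qed.

Lemma dGH_le (A B : MSpace) r :
  bounded_metric A -> bounded_metric B -> GH_close A B r -> dGH A B <= r.
Proof.
  intros GA GB [Z [f [g [HZ [Hf [Hg H]]]]]]. apply Rinf_le with 0.
  - intros y. now apply GH_admissible_nonneg.
  - exists Z, f, g. do 3 (split; auto).
    apply hausdorff_le; auto; apply image_nonempty; [apply GA|apply GB].
Qed.

Definition disjoint_union (A B : MSpace) (D : R) : MSpace :=
  {| carrier := (A + B)%type;
     dist := fun u v => match u, v with
       | inl a, inl a' => dist a a'
       | inr b, inr b' => dist b b'
       | _, _ => D end |}.

Lemma disjoint_union_metric (A B : MSpace) D : is_metric A -> is_metric B -> 0 < D ->
  (forall x y : A, dist x y <= 2 * D) -> (forall x y : B, dist x y <= 2 * D) ->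
  is_metric (disjoint_union A B D).
Proof.
  intros HA HB HD HMA HMB.
  split; [|split; [|split]].
  - intros [a|b] [a'|b']; simpl; try lra; apply metric_nonneg; auto.
  - intros [a|b] [a'|b']; simpl; split; intro H; try lra; try discriminate.
    + f_equal. now apply (metric_eq0 A HA).
    + injection H as ->. now apply metric_refl.
    + f_equal. now apply (metric_eq0 B HB).
    + injection H as ->. now apply metric_refl.
  - intros [a|b] [a'|b']; simpl; try reflexivity; apply metric_sym; auto.
  - intros [a|b] [a'|b'] [a''|b'']; simpl; try (apply metric_triangle; auto).
    + pose proof (metric_nonneg A HA a a'); lra.
    + pose proof (HMA a a''); lra.
    + pose proof (metric_nonneg B HB b' b''); lra.
    + pose proof (metric_nonneg A HA a' a''); lra.
    + pose proof (HMB b b''); lra.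
    + pose proof (metric_nonneg B HB b b'); lra.
Qed.

Lemma GH_admissible_exists (A B : MSpace) :
  bounded_metric A -> bounded_metric B -> exists r, GH_admissible A B r.
Proof.
  intros [HA [_ [MA HMA]]] [HB [_ [MB HMB]]].
  set (U := disjoint_union A B (Rabs MA + Rabs MB + 1)).
  exists (@hausdorff U (@image A U inl) (@image B U inr)), U, inl, inr.
  pose proof (Rle_abs MA). pose proof (Rle_abs MB).
  pose proof (Rabs_pos MA). pose proof (Rabs_pos MB).
  split; [|split; [|split]]; try (intros x y; reflexivity); [|apply Rle_refl].
  apply disjoint_union_metric; auto; try lra;
    intros x y; [specialize (HMA x y)|specialize (HMB x y)]; lra.
Qed.

Lemma GH_close_dGH (A B : MSpace) e :
  bounded_metric A -> bounded_metric B -> 0 < e -> GH_close A B (dGH A B + e).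
Proof.
  intros GA GB He.
  destruct (Rinf_approx (GH_admissible A B) 0 e) as [y [[Z [f [g [HZ [Hf [Hg Hy]]]]]] Hlt]].
  - now apply GH_admissible_exists.
  - intros y. now apply GH_admissible_nonneg.
  - exact He.
  - exists Z, f, g. do 3 (split; auto).
    destruct (image_dist_bounded A B Z f g HZ Hf Hg GA GB) as [M HM].
    eapply hclose_weaken.
    + eapply hclose_hausdorff; eauto; apply image_nonempty; [apply GA|apply GB].
    + change (dGH A B) with (Rinf (GH_admissible A B)). lra.
Qed.

(* Gluing [Z1] and [Z2] along the common copy of [B]; the extra [delta] keeps
   the two halves disjoint, so that the glued distance is a metric. *)
Section Glue.
Variables (B Z1 Z2 : MSpace) (g1 : B -> Z1) (f2 : B -> Z2).
Hypotheses (H1 : is_metric Z1) (H2 : is_metric Z2).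
Hypotheses (Hg1 : isometric_embedding g1) (Hf2 : isometric_embedding f2).
Variable b0 : B.
Variable delta : R.
Hypothesis Hdelta : 0 < delta.

Definition glue_gap (x : Z1) (z : Z2) : R :=
  Rinf (fun r => exists b, r = dist x (g1 b) + dist (f2 b) z).

Lemma glue_gap_sum_nonneg x z b : 0 <= dist x (g1 b) + dist (f2 b) z.
Proof. pose proof (metric_nonneg Z1 H1 x (g1 b)). pose proof (metric_nonneg Z2 H2 (f2 b) z). lra. Qed.

Lemma glue_gap_le x z b : glue_gap x z <= dist x (g1 b) + dist (f2 b) z.
Proof.
  apply Rinf_le with 0; [|now exists b].
  intros y [b' ->]. apply glue_gap_sum_nonneg.
Qed.

Lemma glue_gap_nonneg x z : 0 <= glue_gap x z.
Proof.
  apply Rinf_ge; [now exists (dist x (g1 b0) + dist (f2 b0) z), b0|].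
  intros y [b' ->]. apply glue_gap_sum_nonneg.
Qed.

Lemma glue_gap_approx x z e : 0 < e ->
  exists b, dist x (g1 b) + dist (f2 b) z < glue_gap x z + e.
Proof.
  intro He.
  destruct (Rinf_approx (fun r => exists b, r = dist x (g1 b) + dist (f2 b) z) 0 e)
    as [y [[b ->] Hy]]; auto.
  - now exists (dist x (g1 b0) + dist (f2 b0) z), b0.
  - intros y [b' ->]. apply glue_gap_sum_nonneg.
  - now exists b.
Qed.

Lemma glue_gap_triangle_l x y z : glue_gap x z <= dist x y + glue_gap y z.
Proof.
  apply Rle_plus_epsilon. intros e He. destruct (glue_gap_approx y z e He) as [b Hb].
  pose proof (glue_gap_le x z b). pose proof (metric_triangle Z1 H1 x y (g1 b)). lra.
Qed.

Lemma glue_gap_triangle_r x z z' : glue_gap x z <= glue_gap x z' + dist z' z.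
Proof.
  apply Rle_plus_epsilon. intros e He. destruct (glue_gap_approx x z' e He) as [b Hb].
  pose proof (glue_gap_le x z b). pose proof (metric_triangle Z2 H2 (f2 b) z' z). lra.
Qed.

Lemma dist_le_glue_gap_l x x' z : dist x x' <= glue_gap x z + glue_gap x' z.
Proof.
  apply Rle_plus_epsilon. intros e He.
  destruct (glue_gap_approx x z (e/2)) as [b Hb]; [lra|].
  destruct (glue_gap_approx x' z (e/2)) as [b' Hb']; [lra|].
  pose proof (metric_triangle Z1 H1 x (g1 b) x').
  pose proof (metric_triangle Z1 H1 (g1 b) (g1 b') x').
  pose proof (metric_triangle Z2 H2 (f2 b) z (f2 b')).
  rewrite (Hg1 b b'), (Hf2 b b') in *.
  rewrite (metric_sym Z1 H1 (g1 b') x'), (metric_sym Z2 H2 z (f2 b')) in *. lra.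
Qed.

Lemma dist_le_glue_gap_r x z z' : dist z z' <= glue_gap x z + glue_gap x z'.
Proof.
  apply Rle_plus_epsilon. intros e He.
  destruct (glue_gap_approx x z (e/2)) as [b Hb]; [lra|].
  destruct (glue_gap_approx x z' (e/2)) as [b' Hb']; [lra|].
  pose proof (metric_triangle Z2 H2 z (f2 b) z').
  pose proof (metric_triangle Z2 H2 (f2 b) (f2 b') z').
  pose proof (metric_triangle Z1 H1 (g1 b) x (g1 b')).
  rewrite (Hg1 b b'), (Hf2 b b') in *.
  rewrite (metric_sym Z1 H1 (g1 b) x), (metric_sym Z2 H2 z (f2 b)) in *. lra.
Qed.

Definition glued : MSpace :=
  {| carrier := (Z1 + Z2)%type;
     dist := fun u v => match u, v with
       | inl x, inl y => dist x y
       | inr z, inr w => dist z w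
       | inl x, inr z | inr z, inl x => glue_gap x z + delta end |}.

Lemma glued_metric : is_metric glued.
Proof.
  split; [|split; [|split]].
  - intros [a|b] [a'|b']; simpl; try (apply metric_nonneg; auto);
      [pose proof (glue_gap_nonneg a b')|pose proof (glue_gap_nonneg a' b)]; lra.
  - intros [a|b] [a'|b']; simpl; split; intro H; try discriminate.
    + f_equal. now apply (metric_eq0 Z1 H1).
    + injection H as ->. now apply metric_refl.
    + pose proof (glue_gap_nonneg a b'); lra.
    + pose proof (glue_gap_nonneg a' b); lra.
    + f_equal. now apply (metric_eq0 Z2 H2).
    + injection H as ->. now apply metric_refl.
  - intros [a|b] [a'|b']; simpl; try reflexivity; apply metric_sym; auto.
  - intros [a|b] [a'|b'] [a''|b'']; simpl; try (apply metric_triangle; auto).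
    + pose proof (glue_gap_triangle_l a a' b''); lra.
    + pose proof (dist_le_glue_gap_l a a'' b'); lra.
    + pose proof (glue_gap_triangle_r a b'' b'); lra.
    + pose proof (glue_gap_triangle_l a'' a' b). rewrite (metric_sym Z1 H1 a'' a') in *. lra.
    + pose proof (dist_le_glue_gap_r a' b b''); lra.
    + pose proof (glue_gap_triangle_r a'' b b'). rewrite (metric_sym Z2 H2 b b') in *. lra.
Qed.

Lemma glued_hclose (A C : MSpace) (f1 : A -> Z1) (g2 : C -> Z2) r s :
  hclose (image f1) (image g1) r -> hclose (image f2) (image g2) s ->
  @hclose glued (image (fun a => inl (f1 a) : glued))
                (image (fun c => inr (g2 c) : glued)) (r + s + delta).
Proof.
  intros [K1 K2] [K3 K4]. split.
  - intros u [a <-] e He.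
    destruct (K1 (f1 a) (ex_intro _ a eq_refl) (e/2)) as [w [[b <-] Hw]]; [lra|].
    destruct (K3 (f2 b) (ex_intro _ b eq_refl) (e/2)) as [w' [[c <-] Hw']]; [lra|].
    exists (inr (g2 c)). split; [now exists c|].
    simpl. pose proof (glue_gap_le (f1 a) (g2 c) b). lra.
  - intros u [c <-] e He.
    destruct (K4 (g2 c) (ex_intro _ c eq_refl) (e/2)) as [w [[b <-] Hw]]; [lra|].
    destruct (K2 (g1 b) (ex_intro _ b eq_refl) (e/2)) as [w' [[a <-] Hw']]; [lra|].
    exists (inl (f1 a)). split; [now exists a|].
    simpl. pose proof (glue_gap_le (f1 a) (g2 c) b).
    rewrite (metric_sym Z1 H1 (g1 b) (f1 a)) in Hw'.
    rewrite (metric_sym Z2 H2 (g2 c) (f2 b)) in Hw. lra.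
Qed.

End Glue.

Lemma GH_close_trans (A B C : MSpace) r s delta :
  inhabited B -> 0 < delta -> GH_close A B r -> GH_close B C s -> GH_close A C (r + s + delta).
Proof.
  intros [b0] Hd [Z1 [f1 [g1 [H1 [Hf1 [Hg1 K1]]]]]] [Z2 [f2 [g2 [H2 [Hf2 [Hg2 K2]]]]]].
  set (W := glued B Z1 Z2 g1 f2 delta).
  exists W, (fun a => inl (f1 a) : W), (fun c => inr (g2 c) : W).
  split; [|split; [|split]].
  - now apply glued_metric.
  - intros x y. apply Hf1.
  - intros x y. apply Hg2.
  - now apply glued_hclose.
Qed.

Lemma dGH_triangle (A B C : MSpace) :
  bounded_metric A -> bounded_metric B -> bounded_metric C -> dGH A C <= dGH A B + dGH B C.
Proof.
  intros GA GB GC. apply Rle_plus_epsilon. intros e He.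
  assert (HAB := GH_close_dGH A B (e/3) GA GB ltac:(lra)).
  assert (HBC := GH_close_dGH B C (e/3) GB GC ltac:(lra)).
  assert (HAC := GH_close_trans A B C _ _ (e/3) (proj1 (proj2 GB)) ltac:(lra) HAB HBC).
  pose proof (dGH_le A C _ GA GC HAC). lra.
Qed.

Lemma dGH_sym (A B : MSpace) : bounded_metric A -> bounded_metric B -> dGH A B = dGH B A.
Proof.
  assert (Hle : forall A B, bounded_metric A -> bounded_metric B -> dGH A B <= dGH B A).
  { intros A' B' GA GB. apply Rle_plus_epsilon. intros e He.
    apply dGH_le; auto. apply GH_close_sym. now apply GH_close_dGH. }
  intros GA GB. apply Rle_antisym; auto.
Qed.

Lemma dGH_perturb (A B A' B' : MSpace) eps :
  bounded_metric A -> bounded_metric B -> bounded_metric A' -> bounded_metric B' ->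
  dGH A A' <= eps -> dGH B B' <= eps ->
  dGH A B <= dGH A' B' + 2 * eps /\ dGH A' B' <= dGH A B + 2 * eps.
Proof.
  intros GA GB GA' GB' HA HB.
  pose proof (dGH_triangle A A' B GA GA' GB). pose proof (dGH_triangle A' B' B GA' GB' GB).
  pose proof (dGH_triangle A' A B' GA' GA GB'). pose proof (dGH_triangle A B B' GA GB GB').
  rewrite (dGH_sym B' B) in *; auto. rewrite (dGH_sym A' A) in *; auto. lra.
Qed.

(** * Finite nets in compact spaces *)

Fixpoint iter_list {T : Type} (F : list T -> T) (n : nat) : list T :=
  match n with O => nil | S k => F (iter_list F k) :: iter_list F k end.

Lemma iter_list_In {T : Type} (F : list T -> T) m n :
  (m < n)%nat -> In (F (iter_list F m)) (iter_list F n).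
Proof.
  induction n as [|k IH]; intro H; [lia|]. simpl.
  destruct (Nat.eq_dec m k) as [->|Hne]; [now left|]. right. apply IH. lia.
Qed.

(* Without a finite eps-net one can choose points pairwise eps apart, a sequence
   with no convergent subsequence. *)
Lemma compact_finite_net (X : MSpace) : is_metric X -> compact_space X ->
  forall eps, 0 < eps -> exists l : list X, forall x, exists p, In p l /\ dist x p < eps.
Proof.
  intros HX Hc eps He. apply NNPP; intro Hn.
  assert (Hfar : forall l : list X, exists x, forall p, In p l -> eps <= dist x p).
  { intro l. apply NNPP; intro H. apply Hn. exists l. intro x. apply NNPP; intro H'.
    apply H. exists x. intros p Hp. apply Rnot_lt_le. intro Hlt. apply H'. now exists p. }
  destruct (choice _ Hfar) as [F HF].
  set (u := fun n => F (iter_list F n)).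
  destruct (Hc u) as [phi [l0 [Hphi Hconv]]].
  destruct (Hconv (eps/2)) as [N HN]; [lra|].
  pose proof (HN N (le_n N)). pose proof (HN (S N) (le_S _ _ (le_n N))).
  pose proof (HF (iter_list F (phi (S N))) (u (phi N)) (iter_list_In F _ _ (Hphi N))).
  pose proof (metric_triangle X HX (u (phi (S N))) l0 (u (phi N))).
  rewrite (metric_sym X HX l0 (u (phi N))) in *. unfold u in *. lra.
Qed.

Lemma dist_le_sum_dist (X : MSpace) (HX : is_metric X) (x0 : X) (l : list X) p :
  In p l -> dist x0 p <= fold_right (fun q acc => dist x0 q + acc) 0 l.
Proof.
  assert (Hpos : forall l', 0 <= fold_right (fun q acc => dist x0 q + acc) 0 l').
  { induction l' as [|a l' IH]; simpl; [lra|]. pose proof (metric_nonneg X HX x0 a). lra. }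
  induction l as [|a l IH]; intros Hp; simpl; [destruct Hp|].
  pose proof (Hpos l). pose proof (metric_nonneg X HX x0 a).
  destruct Hp as [<-|Hp]; [lra|]. pose proof (IH Hp). lra.
Qed.

Lemma compact_bounded (X : MSpace) : is_metric X -> inhabited X -> compact_space X -> bounded X.
Proof.
  intros HX [x0] Hc. destruct (compact_finite_net X HX Hc 1) as [l Hl]; [lra|].
  set (S := fold_right (fun q acc => dist x0 q + acc) 0 l).
  exists (1 + S + S + 1). intros x y.
  destruct (Hl x) as [p [Hp Hxp]]. destruct (Hl y) as [q [Hq Hyq]].
  pose proof (dist_le_sum_dist X HX x0 l p Hp). pose proof (dist_le_sum_dist X HX x0 l q Hq).
  pose proof (metric_triangle X HX x p y). pose proof (metric_triangle X HX p x0 y).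
  pose proof (metric_triangle X HX x0 q y).
  rewrite (metric_sym X HX p x0), (metric_sym X HX q y) in *. unfold S. lra.
Qed.

Lemma compact_bounded_metric (X : MSpace) :
  is_metric X -> inhabited X -> compact_space X -> bounded_metric X.
Proof. intros HX Hi Hc. split; [|split]; auto. now apply compact_bounded. Qed.

Definition subspace (X : MSpace) (P : X -> Prop) : MSpace :=
  {| carrier := {x : X | P x}; dist := fun a b => dist (proj1_sig a) (proj1_sig b) |}.

Lemma subspace_metric (X : MSpace) (P : X -> Prop) : is_metric X -> is_metric (subspace X P).
Proof.
  intro HX. split; [|split; [|split]]; simpl.
  - intros. now apply metric_nonneg.
  - intros [x Hx] [y Hy]; simpl. split; intro H.
    + apply metric_eq0 in H; auto. subst y. f_equal. apply proof_irrelevance.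
    + injection H as ->. now apply metric_refl.
  - intros. now apply metric_sym.
  - intros. now apply metric_triangle.
Qed.

Lemma subspace_list_finite (X : MSpace) (l : list X) :
  finite_space (subspace X (fun x => In x l)).
Proof.
  assert (H : forall k, incl k l -> exists k' : list (subspace X (fun x => In x l)),
             forall s, In (proj1_sig s) k -> In s k').
  { induction k as [|a k IH]; intro Hk.
    - exists nil. intros s [].
    - destruct IH as [k' Hk']; [intros x Hx; apply Hk; now right|].
      assert (Ha : In a l) by (apply Hk; now left).
      exists (exist _ a Ha :: k'). intros [x Hx] [Hxa|Hxk]; simpl in *.
      + subst x. left. f_equal. apply proof_irrelevance.
      + right. now apply (Hk' (exist _ x Hx)). }
  destruct (H l (incl_refl l)) as [l' Hl']. exists l'. intros s. apply Hl'. exact (proj2_sig s).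
Qed.

Section FiniteNet.
Variable X : MSpace.
Hypothesis HX : is_metric X.
Variable M : R.
Hypothesis HM : forall x y : X, dist x y <= M.
Variable l : list X.
Let Xl := subspace X (fun x => In x l).

Lemma Xl_metric : is_metric Xl.
Proof. now apply subspace_metric. Qed.

Definition incl_set (A : Xl -> Prop) : X -> Prop := fun x => exists s, A s /\ proj1_sig s = x.

Lemma incl_set_closed (A : Hyper Xl) :
  nonempty_set (incl_set (proj1_sig A)) /\ is_closed (incl_set (proj1_sig A)).
Proof.
  destruct A as [A [[s Hs] HcA]]; simpl. split.
  - now exists (proj1_sig s), s.
  - apply (is_closed_finite X HX _ l). intros z [t [_ <-]]. exact (proj2_sig t).
Qed.

Definition incl_Hyper (A : Hyper Xl) : Hyper X := exist _ _ (incl_set_closed A).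

Lemma hclose_incl_set (A B : Xl -> Prop) r : hclose A B r <-> hclose (incl_set A) (incl_set B) r.
Proof.
  split.
  - intros [K1 K2]. split.
    + intros x [s [Hs <-]] e He. destruct (K1 s Hs e He) as [t [Ht Hd]].
      exists (proj1_sig t). split; auto. now exists t.
    + intros x [s [Hs <-]] e He. destruct (K2 s Hs e He) as [t [Ht Hd]].
      exists (proj1_sig t). split; auto. now exists t.
  - intros [K1 K2]. split.
    + intros s Hs e He.
      destruct (K1 (proj1_sig s) (ex_intro _ s (conj Hs eq_refl)) e He) as [y [[t [Ht <-]] Hd]].
      now exists t.
    + intros s Hs e He.
      destruct (K2 (proj1_sig s) (ex_intro _ s (conj Hs eq_refl)) e He) as [y [[t [Ht <-]] Hd]].
      now exists t.
Qed.

Lemma incl_Hyper_isometric : isometric_embedding incl_Hyper.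
Proof.
  intros A B. simpl.
  destruct (incl_set_closed A) as [HA' _]. destruct (incl_set_closed B) as [HB' _].
  destruct A as [A [HA HcA]]. destruct B as [B [HB HcB]]; simpl in *.
  assert (Hb : forall A B : Xl -> Prop, dist_bounded A B M) by (intros ? ? ? ? _ _; apply HM).
  apply Rle_antisym; [apply (hausdorff_le X HX)|apply (hausdorff_le Xl Xl_metric)]; auto.
  - apply hclose_incl_set. eapply hclose_hausdorff; eauto using Xl_metric.
  - apply hclose_incl_set. eapply hclose_hausdorff; eauto.
    intros ? ? _ _. apply HM.
Qed.

Variable eps : R.
Hypothesis Heps : 0 < eps.
Hypothesis Hnet : forall x, exists p, In p l /\ dist x p < eps.

Lemma GH_close_net : GH_close Xl X eps.
Proof.
  exists X, (fun s : Xl => proj1_sig s), (fun x => x).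
  split; [exact HX|split; [intros x y; reflexivity|split; [intros x y; reflexivity|split]]].
  - intros x [s <-] e He. exists (proj1_sig s). split; [now exists (proj1_sig s)|].
    rewrite metric_refl; auto; lra.
  - intros x [y <-] e He. destruct (Hnet y) as [p [Hp Hd]].
    exists p. split; [now exists (exist _ p Hp : Xl)|lra].
Qed.

(* A closed set A of X is eps-close to the (finite, hence closed) set of net
   points lying within eps of A. *)
Lemma GH_close_Hyper_net : GH_close (Hyper X) (Hyper Xl) eps.
Proof.
  assert (HHX : is_metric (Hyper X)) by (apply Hyper_metric; auto; now exists M).
  exists (Hyper X), (fun A => A), incl_Hyper.
  split; [exact HHX|split; [intros x y; reflexivity|split; [exact incl_Hyper_isometric|split]]].
  - intros A' [A <-] e He. destruct A as [A [[a0 Ha0] HcA]].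
    set (A'' := fun s : Xl => exists a, A a /\ dist a (proj1_sig s) < eps).
    assert (HA'' : nonempty_set A'' /\ is_closed A'').
    { split.
      - destruct (Hnet a0) as [p [Hp Hd]]. now exists (exist _ p Hp : Xl), a0.
      - destruct (subspace_list_finite X l) as [l' Hl'].
        apply (is_closed_finite Xl Xl_metric _ l'). auto. }
    exists (incl_Hyper (exist _ A'' HA'')). split; [eexists; reflexivity|].
    apply Rle_lt_trans with eps; [|lra]. simpl.
    apply hausdorff_le; auto; [now exists a0|apply (incl_set_closed (exist _ A'' HA''))|].
    split.
    + intros a Ha e' He'. destruct (Hnet a) as [p [Hp Hd]].
      exists p. split; [|lra]. exists (exist _ p Hp : Xl). split; auto. now exists a.
    + intros x [s [[a [Ha Hd]] <-]] e' He'. exists a. split; auto.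
      rewrite metric_sym; auto; lra.
  - intros B [C <-] e He. exists (incl_Hyper C). split; [now exists (incl_Hyper C)|].
    rewrite metric_refl; auto; lra.
Qed.

End FiniteNet.

Lemma finite_approximation (X : MSpace) : is_metric X -> inhabited X -> compact_space X ->
  forall eps, 0 < eps -> exists X' : MSpace,
    is_metric X' /\ inhabited X' /\ finite_space X' /\ bounded_metric X' /\
    dGH X X' <= eps /\ dGH (Hyper X) (Hyper X') <= eps.
Proof.
  intros HX [x0] Hc eps He.
  assert (GX : bounded_metric X) by now apply compact_bounded_metric.
  destruct (compact_bounded X HX (inhabits x0) Hc) as [M HM].
  destruct (compact_finite_net X HX Hc eps He) as [l Hl].
  set (Xl := subspace X (fun x => In x l)).
  assert (HXl : is_metric Xl) by now apply subspace_metric.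
  assert (iXl : inhabited Xl).
  { destruct (Hl x0) as [p [Hp _]]. constructor. exact (exist _ p Hp). }
  assert (GXl : bounded_metric Xl).
  { split; [|split]; auto. exists M. intros [x Hx] [y Hy]. apply HM. }
  exists Xl. split; [|split; [|split; [apply subspace_list_finite|split; [|split]]]]; auto.
  - rewrite dGH_sym; auto. apply dGH_le; auto. now apply GH_close_net.
  - apply dGH_le; try apply Hyper_bounded_metric; auto.
    now apply (GH_close_Hyper_net X HX M HM).
Qed.

Theorem mainTheorem19 :
  (forall X Y : MSpace,
     is_metric X -> inhabited X -> finite_space X ->
     is_metric Y -> inhabited Y -> finite_space Y ->
     dGH (Hyper X) (Hyper Y) = dGH X Y) ->
  forall X Y : MSpace,
     is_metric X -> inhabited X -> compact_space X ->
     is_metric Y -> inhabited Y -> compact_space Y ->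
     dGH (Hyper X) (Hyper Y) = dGH X Y.
Proof.
  intros Hfinite X Y HX iX cX HY iY cY.
  assert (GX := compact_bounded_metric X HX iX cX).
  assert (GY := compact_bounded_metric Y HY iY cY).
  assert (Hclose : forall eps, 0 < eps ->
    dGH (Hyper X) (Hyper Y) <= dGH X Y + 4 * eps /\
    dGH X Y <= dGH (Hyper X) (Hyper Y) + 4 * eps).
  { intros eps He.
    destruct (finite_approximation X HX iX cX eps He) as [X' [HX' [iX' [fX' [GX' [DX HDX]]]]]].
    destruct (finite_approximation Y HY iY cY eps He) as [Y' [HY' [iY' [fY' [GY' [DY HDY]]]]]].
    pose proof (dGH_perturb X Y X' Y' eps GX GY GX' GY' DX DY).
    pose proof (dGH_perturb (Hyper X) (Hyper Y) (Hyper X') (Hyper Y') eps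
                  (Hyper_bounded_metric X GX) (Hyper_bounded_metric Y GY)
                  (Hyper_bounded_metric X' GX') (Hyper_bounded_metric Y' GY') HDX HDY).
    rewrite (Hfinite X' Y') in *; auto. lra. }
  apply Rle_antisym; apply Rle_plus_epsilon; intros e He;
    destruct (Hclose (e / 4)) as [H1 H2]; lra.
Qed.
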